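(* Let $a,b,c,p\in\mathbb{C}$ with $-c\notin\mathbb{N}\cup\{0\}$. Define $(u_n)$ and $(v_n)$ by $u_0=1$, $u_1=\frac{ab}{c}+ip$, $u_2=\frac{iabp}{c}+\frac{a(a+1)b(b+1)}{2c(c+1)}-\frac{p^2}{2}$, $v_0=1$, $v_1=\frac{ab}{c}-ip$, $v_2=-\frac{iabp}{c}+\frac{a(a+1)b(b+1)}{2c(c+1)}-\frac{p^2}{2}$, and for all integers $n\ge2$, \[ u_{n+1}=\frac{(a+n)(b+n)+ip(c+2n)}{(n+1)(c+n)}u_n+\frac{p\left(p-i(a+b+2n-1)\right)}{(n+1)(c+n)}u_{n-1}-\frac{p^2}{(n+1)(c+n)}u_{n-2}, \] \[ v_{n+1}=\frac{(a+n)(b+n)-ip(c+2n)}{(n+1)(c+n)}v_n+\frac{p\left(p+i(a+b+2n-1)\right)}{(n+1)(c+n)}v_{n-1}-\frac{p^2}{(n+1)(c+n)}v_{n-2}. \] Then \[ \sin(pz)F(a,b;c;z)=\sum_{n=0}^\infty\frac{u_n-v_n}{2i}z^n,\qquad |z|<1. \]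
   Context: Here $i$ is the imaginary unit. For $a\in\mathbb{C}$, $(a)_n=a(a+1)\cdots(a+n-1)$ denotes the Pochhammer symbol, with $(a)_0=1$. For $a,b,c\in\mathbb{C}$ with $-c\notin\mathbb{N}\cup\{0\}$, the Gaussian hypergeometric function is $F(a,b;c;z)=\sum_{n=0}^\infty \frac{(a)_n(b)_n}{(c)_n\,n!}z^n$, $|z|<1$. *)

From HB Require Import structures.
From mathcomp Require Import all_boot all_order all_algebra.
From mathcomp Require Import complex.
From mathcomp Require Import all_classical all_reals all_analysis.
Set Implicit Arguments. Unset Strict Implicit. Unset Printing Implicit Defensive.
Import Order.TTheory GRing.Theory Num.Theory.
Import numFieldNormedType.Exports.
Local Open Scope ring_scope.
Local Open Scope complex_scope.

(* Equip R[i] with its canonical numField (norm) topology, as mathcomp-analysis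
   does generically for numFieldTypes (instances are keyed on the head symbol,
   so they must be copied onto [complex R]). *)
HB.instance Definition _ (R : rcfType) :=
  PseudoPointedMetric.copy (complex R) (complex R)^o.
HB.instance Definition _ (R : rcfType) :=
  NormedModule.copy (complex R) (complex R)^o.

Definition poch {R : realType} (a : R[i]) (n : nat) : R[i] :=
  \prod_(k < n) (a + k%:R).

Definition hyp_coef {R : realType} (a b c : R[i]) (n : nat) : R[i] :=
  poch a n * poch b n / (poch c n * n`!%:R).

Definition hypF {R : realType} (a b c z : R[i]) : R[i] :=
  limn (series (fun n => hyp_coef a b c n * z ^+ n)).

Definition Csin {R : realType} (w : R[i]) : R[i] :=
  limn (series (fun k => (-1) ^+ k * w ^+ (2 * k + 1) / (2 * k + 1)`!%:R)).

From HB Require Import structures.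
From mathcomp Require Import all_boot all_order all_algebra.
From mathcomp Require Import complex.
From mathcomp Require Import all_classical all_reals all_analysis.
From mathcomp Require Import ring lra.
Import Order.TTheory GRing.Theory Num.Theory.
Import numFieldNormedType.Exports.
Local Open Scope ring_scope.
Local Open Scope complex_scope.
Local Open Scope classical_set_scope.

(* The sequences [u] and [v] are the Taylor coefficients of [exp(± i p z) F(z)],
   [F = F(a,b;c;·)].  With [θ = z d/dz], [F] solves [θ(θ + c - 1) F = z (θ + a)(θ + b) F];
   commuting [θ] past [exp(q z)] turns this into a three-term recurrence for the
   coefficients of [exp(q z) F], which for [q = ± i p] is the recurrence defining
   [u] and [v], with the same initial values.  Hence [(u_n - v_n) / 2i] are the
   coefficients of the Cauchy product of the sine series with the hypergeometric
   series.  For [|z| < 1] both series converge absolutely (the latter by the ratio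
   test), so the Cauchy product converges to the product of the sums; absolute
   convergence of complex series is reduced to real and imaginary parts. *)

Local Notation normc := (@Normc.normc _).
Local Notation Re := (@complex.Re _).
Local Notation Im := (@complex.Im _).

Definition cauchy_prod {T : pzRingType} (x y : nat -> T) n :=
  \sum_(k < n.+1) x k * y (n - k)%N.

Section CauchyProduct.
Variable T : comPzRingType.
Implicit Types (x y g h : nat -> T) (z : T).

Lemma eq_cauchy_prodr x g h : g =1 h -> cauchy_prod x g =1 cauchy_prod x h.
Proof. by move=> gh n; apply: eq_bigr => k _; rewrite gh. Qed.

Lemma cauchy_prodDr x g h n :
  cauchy_prod x (fun m => g m + h m) n = cauchy_prod x g n + cauchy_prod x h n.
Proof. by rewrite -big_split; apply: eq_bigr => k _; rewrite mulrDr. Qed.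

Lemma cauchy_prodZr x z g n :
  cauchy_prod x (fun m => z * g m) n = z * cauchy_prod x g n.
Proof. by rewrite mulr_sumr; apply: eq_bigr => k _; rewrite mulrCA. Qed.

Lemma cauchy_prodBl x y g : cauchy_prod (x - y) g = cauchy_prod x g - cauchy_prod y g.
Proof.
apply/funext => n; rewrite !fctE /cauchy_prod -sumrB.
by apply: eq_bigr => k _; rewrite mulrBl.
Qed.

Lemma cauchy_prodBr x g h : cauchy_prod x (g - h) = cauchy_prod x g - cauchy_prod x h.
Proof.
apply/funext => n; rewrite !fctE /cauchy_prod -sumrB.
by apply: eq_bigr => k _; rewrite mulrBr.
Qed.

Lemma cauchy_prod_mulrX x y z n :
  cauchy_prod (fun k => x k * z ^+ k) (fun k => y k * z ^+ k) n
  = cauchy_prod x y n * z ^+ n.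
Proof.
rewrite mulr_suml; apply: eq_bigr => k _.
have -> : z ^+ n = z ^+ k * z ^+ (n - k) by rewrite -exprD subnKC // -ltnS.
by ring.
Qed.

Lemma series_cauchy_prod x y N :
  series (cauchy_prod x y) N = \sum_(i < N) x i * series y (N - i)%N.
Proof.
elim: N => [|N IH]; first by rewrite /series /= big_geq // big_ord0.
rewrite seriesSr IH /cauchy_prod.
have -> : \sum_(i < N.+1) x i * series y (N.+1 - i)%N
    = \sum_(i < N.+1) x i * series y (N - i)%N + \sum_(i < N.+1) x i * y (N - i)%N.
  rewrite -big_split; apply: eq_bigr => i _.
  by rewrite subSn ?(ltnSE (ltn_ord i)) // seriesSr mulrDr.
rewrite [\sum_(i < N.+1) x i * series y _]big_ord_recr /= subnn.
by rewrite [series y 0]/series /= big_geq // mulr0 addr0.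
Qed.

End CauchyProduct.

Lemma eq_rec3 (T : Type) (step : nat -> T -> T -> T -> T) (s t : nat -> T) :
  s 0%N = t 0%N -> s 1%N = t 1%N -> s 2%N = t 2%N ->
  (forall n, (2 <= n)%N -> s n.+1 = step n (s n) (s n.-1) (s n.-2)) ->
  (forall n, (2 <= n)%N -> t n.+1 = step n (t n) (t n.-1) (t n.-2)) ->
  s =1 t.
Proof.
move=> st0 st1 st2 s_rec t_rec.
suff st : forall n, [/\ s n = t n, s n.+1 = t n.+1 & s n.+2 = t n.+2].
  by move=> n; case: (st n).
elim=> [//|n [st_n st_n1 st_n2]]; split=> //.
by rewrite s_rec // t_rec //= st_n st_n1 st_n2.
Qed.

Section ExpCauchyProduct.
Context {F : numFieldType}.
Implicit Types (q : F) (g : nat -> F).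

Definition exp_coef q k := q ^+ k / k`!%:R.

(* coefficients of [z g'(z)] *)
Definition euler_op g m := m%:R * g m.

Lemma exp_coefS q k : k.+1%:R * exp_coef q k.+1 = q * exp_coef q k.
Proof.
have kf_neq0 : k`!%:R != 0 :> F by rewrite pnatr_eq0 -lt0n fact_gt0.
by rewrite /exp_coef factS natrM exprS; field; rewrite kf_neq0 nat1r pnatr_eq0.
Qed.

(* Leibniz rule [θ (exp(q z) g) = exp(q z) θ g + q z exp(q z) g] *)
Lemma cauchy_prod_exp_euler q g N :
  cauchy_prod (exp_coef q) (euler_op g) N.+1
  = N.+1%:R * cauchy_prod (exp_coef q) g N.+1 - q * cauchy_prod (exp_coef q) g N.
Proof.
rewrite /cauchy_prod /euler_op.
have -> : \sum_(k < N.+2) exp_coef q k * ((N.+1 - k)%N%:R * g (N.+1 - k)%N)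
    = \sum_(k < N.+2) (N.+1%:R * (exp_coef q k * g (N.+1 - k)%N)
                      - k%:R * exp_coef q k * g (N.+1 - k)%N).
  by apply: eq_bigr => k _; rewrite natrB ?(ltnSE (ltn_ord k)) //; ring.
rewrite sumrB -mulr_sumr [\sum_(k < N.+2) k%:R * _ * _]big_ord_recl /= !mul0r add0r.
rewrite [q * _]mulr_sumr.
congr (_ - _); apply: eq_bigr => k _.
by rewrite /bump /= add1n subSS exp_coefS -mulrA.
Qed.

Context {a b c : F} {f : nat -> F}.
Hypothesis f_rec :
  forall m, m.+1%:R * (c + m%:R) * f m.+1 = (a + m%:R) * (b + m%:R) * f m.

Local Notation U q := (cauchy_prod (exp_coef q) f).

Lemma cauchy_prod_exp_rec q m :
  m.+3%:R * (c + m.+2%:R) * U q m.+3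
  = ((a + m.+2%:R) * (b + m.+2%:R) + q * (c + 2 * m.+2%:R)) * U q m.+2
    - q * (q + a + b + 2 * m.+2%:R - 1) * U q m.+1 + q ^+ 2 * U q m.
Proof.
(* [f_rec] is the equation [θ(θ + c - 1) f = z (θ + a)(θ + b) f] *)
have hyp_eq N :
    cauchy_prod (exp_coef q) (fun n => n%:R * (c + n%:R - 1) * f n) N.+1
    = cauchy_prod (exp_coef q) (fun n => (a + n%:R) * (b + n%:R) * f n) N.
  rewrite /cauchy_prod big_ord_recr /= subnn !mul0r mulr0 addr0.
  apply: eq_bigr => k _; rewrite subSn ?(ltnSE (ltn_ord k)) // -f_rec.
  by rewrite !mulrS; ring.
have lhsE N : cauchy_prod (exp_coef q) (fun n => n%:R * (c + n%:R - 1) * f n) N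
    = cauchy_prod (exp_coef q) (euler_op (euler_op f)) N
      + (c - 1) * cauchy_prod (exp_coef q) (euler_op f) N.
  by rewrite -cauchy_prodZr -cauchy_prodDr; apply: eq_cauchy_prodr => n; rewrite /euler_op; ring.
have rhsE N : cauchy_prod (exp_coef q) (fun n => (a + n%:R) * (b + n%:R) * f n) N
    = cauchy_prod (exp_coef q) (euler_op (euler_op f)) N
      + (a + b) * cauchy_prod (exp_coef q) (euler_op f) N + a * b * U q N.
  by rewrite -!cauchy_prodZr -!cauchy_prodDr; apply: eq_cauchy_prodr => n; rewrite /euler_op; ring.
move: (hyp_eq m.+2); rewrite lhsE rhsE !cauchy_prod_exp_euler.
move/eqP; rewrite -subr_eq0 => /eqP hyp_eq0.
by apply/eqP; rewrite -subr_eq0 -hyp_eq0; apply/eqP; rewrite !mulrS; ring.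
Qed.

Lemma cauchy_prod_exp_unique (p q : F) (w : nat -> F) :
  q ^+ 2 = - p ^+ 2 -> (forall m, c + m%:R != 0) ->
  w 0%N = U q 0 -> w 1%N = U q 1 -> w 2%N = U q 2 ->
  (forall n, (2 <= n)%N -> w n.+1 =
      ((a + n%:R) * (b + n%:R) + q * (c + 2 * n%:R)) / ((n%:R + 1) * (c + n%:R)) * w n
    + (p ^+ 2 - q * (a + b + 2 * n%:R - 1)) / ((n%:R + 1) * (c + n%:R)) * w n.-1
    - p ^+ 2 / ((n%:R + 1) * (c + n%:R)) * w n.-2) ->
  w =1 U q.
Proof.
move=> qp c_neq0 w0 w1 w2 w_rec.
pose d n := (n%:R + 1) * (c + n%:R).
pose step n (x y v : F) := ((a + n%:R) * (b + n%:R) + q * (c + 2 * n%:R)) / d n * x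
  + (p ^+ 2 - q * (a + b + 2 * n%:R - 1)) / d n * y - p ^+ 2 / d n * v.
apply: (@eq_rec3 _ step _ _ w0 w1 w2 w_rec) => -[|[|m]] // _.
have d_neq0 : (m.+2%:R + 1) * (c + m.+2%:R) != 0 by rewrite mulf_neq0 // natr1 pnatr_eq0.
apply: (mulfI d_neq0); rewrite /step /d /= natr1 cauchy_prod_exp_rec -[p ^+ 2]opprK -qp.
by field; rewrite -[2 + _]natrD -[3 + _]natrD c_neq0 pnatr_eq0.
Qed.

End ExpCauchyProduct.

Section RealSeries.
Context {R : realType}.
Implicit Types x y : R^nat.

Lemma nondecreasing_series_ge0 x : (forall n, 0 <= x n) -> nondecreasing_seq (series x).
Proof.
by move=> x0 n m nm; apply: (nondecreasing_series (P := xpredT) (m := 0%N)).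
Qed.

Section NonnegativeCauchyProduct.
Variables x y : R^nat.
Hypotheses (x_ge0 : forall n, 0 <= x n) (y_ge0 : forall n, 0 <= y n).

Lemma le_series_cauchy_prod_mul N :
  series (cauchy_prod x y) N <= series x N * series y N.
Proof.
rewrite series_cauchy_prod [series x]seriesEord /= mulr_suml.
apply: ler_sum => i _; rewrite ler_wpM2l //.
exact: (nondecreasing_series_ge0 _ y_ge0) (leq_subr _ _).
Qed.

Lemma le_series_mul_cauchy_prod N :
  series x N * series y N <= series (cauchy_prod x y) N.*2.
Proof.
pose g i := x i * series y (N.*2 - i)%N.
have g_ge0 i : 0 <= g i by rewrite mulr_ge0 ?sumr_ge0.
rewrite series_cauchy_prod [series x]seriesEord /= mulr_suml.
apply: (@le_trans _ _ (series g N)).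
  rewrite [series g]seriesEord /=; apply: ler_sum => i _; rewrite ler_wpM2l //.
  apply: (nondecreasing_series_ge0 _ y_ge0).
  by rewrite -addnn -addnBA ?leq_addr // ltnW.
apply: le_trans (nondecreasing_series_ge0 _ g_ge0 N N.*2 _) _.
  by rewrite -addnn leq_addr.
by rewrite [series g]seriesEord.
Qed.

Lemma cvg_series_cauchy_prod_ge0 : cvgn (series x) -> cvgn (series y) ->
  series (cauchy_prod x y) @ \oo --> limn (series x) * limn (series y).
Proof.
move=> x_cvg y_cvg.
have x_le := nondecreasing_cvgn_le (nondecreasing_series_ge0 _ x_ge0) x_cvg.
have y_le := nondecreasing_cvgn_le (nondecreasing_series_ge0 _ y_ge0) y_cvg.
have xy_ge0 n : 0 <= cauchy_prod x y n by apply: sumr_ge0 => k _; rewrite mulr_ge0.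
have xy_nd := nondecreasing_series_ge0 _ xy_ge0.
have xy_ub N : series (cauchy_prod x y) N <= limn (series x) * limn (series y).
  apply: le_trans (le_series_cauchy_prod_mul N) _.
  by apply: ler_pM => //; apply: sumr_ge0.
have xy_cvg : cvgn (series (cauchy_prod x y)).
  by apply: nondecreasing_is_cvgn => //; exists (limn (series x) * limn (series y)) => _ [n _ <-].
suff -> : limn (series x) * limn (series y) = limn (series (cauchy_prod x y)) by [].
apply/le_anti/andP; split; last by apply: limr_le => //; apply: nearW.
rewrite -limM //; apply: limr_le; first exact: is_cvgM.
apply: nearW => N /=; apply: le_trans (le_series_mul_cauchy_prod N) _.
exact: nondecreasing_cvgn_le.
Qed.

End NonnegativeCauchyProduct.

Lemma cvg_series_cauchy_prod_normed x y :
  cvgn [normed series x] -> cvgn [normed series y] ->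
  series (cauchy_prod x y) @ \oo --> limn (series x) * limn (series y).
Proof.
pose pos (s : R^nat) n : R := (`|s n| + s n) / 2.
pose neg (s : R^nat) n : R := (`|s n| - s n) / 2.
have posB s : s = pos s - neg s by apply/funext => n; rewrite !fctE /pos /neg; field.
have pos_ge0 s n : 0 <= pos s n by rewrite divr_ge0 // -lerBlDr sub0r ler_normr lexx orbT.
have neg_ge0 s n : 0 <= neg s n by rewrite divr_ge0 // subr_ge0 ler_norm.
have cvg_pos (s : R^nat) : cvgn [normed series s] -> cvgn (series (pos s)).
  apply: series_le_cvg (pos_ge0 s) (fun n => normr_ge0 (s n)) _ => n.
  by rewrite ler_pdivrMr // mulr2n mulrDr mulr1 lerD2l ler_norm.
have cvg_neg (s : R^nat) : cvgn [normed series s] -> cvgn (series (neg s)).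
  apply: series_le_cvg (neg_ge0 s) (fun n => normr_ge0 (s n)) _ => n.
  by rewrite ler_pdivrMr // mulr2n mulrDr mulr1 lerD2l ler_normr lexx orbT.
move=> cx cy; have [cpx cnx] := (cvg_pos x cx, cvg_neg x cx).
have [cpy cny] := (cvg_pos y cy, cvg_neg y cy).
rewrite (posB x) (posB y) cauchy_prodBl !cauchy_prodBr !(seriesD, seriesN).
rewrite !limB // mulrBl !mulrBr.
by apply: cvgB; apply: cvgB; apply: cvg_series_cauchy_prod_ge0.
Qed.

Lemma ratio_test x (rho : R) : (forall n, 0 <= x n) -> 0 <= rho < 1 ->
  (\forall n \near \oo, x n.+1 <= rho * x n) -> cvgn (series x).
Proof.
move=> x0 /andP[rho0 rho1] [N _ xN].
have tail_le k : x (k + N)%N <= geometric (x N) rho k.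
  elim: k => [|k IH]; first by rewrite /geometric /= add0n expr0 mulr1.
  apply: le_trans (xN _ (leq_addl _ _)) _.
  by rewrite /geometric /= exprS mulrCA ler_wpM2l.
have tail_cvg : cvgn (series (fun k => x (k + N)%N)).
  apply: (@series_le_cvg _ _ (geometric (x N) rho) _ _ tail_le) => // [k|].
    by rewrite /geometric /= mulr_ge0 // exprn_ge0.
  by apply: is_cvg_geometric_series; rewrite ger0_norm.
apply/cvg_ex; exists (series x N + limn (series (fun k => x (k + N)%N))).
rewrite -(cvg_shiftn N) /=.
have -> : (fun n => series x (n + N)%N) = fun n => series x N + series (fun k => x (k + N)%N) n.
  apply/funext => n; rewrite series_addn; congr (_ + _).
  by rewrite [in RHS]seriesEnat /= -{1}[N]add0n big_addn addnK.
by apply: cvgD; [exact: cvg_cst | exact: tail_cvg].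
Qed.

End RealSeries.

Section ComplexNorm.
Context {R : realType}.
Implicit Types w : R[i].

Lemma normc_ge0 w : 0 <= normc w.
Proof. by case: w => ? ?; apply: sqrtr_ge0. Qed.

Lemma normr_normc w : `|w| = (normc w)%:C.
Proof. by case: w => ? ?; rewrite normc_def. Qed.

Lemma normcX w k : normc (w ^+ k) = normc w ^+ k.
Proof. by apply: complexI; rewrite rmorphXn -!normr_normc normrX. Qed.

Lemma normc_nat k : normc (k%:R : R[i]) = k%:R.
Proof. by apply: complexI; rewrite -normr_normc normr_nat rmorph_nat. Qed.

Lemma ler_Re_normc w : `|Re w| <= normc w.
Proof.
case: w => u v; rewrite /= -sqrtr_sqr ler_sqrt ?addr_ge0 ?sqr_ge0 //.
by rewrite lerDl sqr_ge0.
Qed.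

Lemma ler_Im_normc w : `|Im w| <= normc w.
Proof.
case: w => u v; rewrite /= -sqrtr_sqr ler_sqrt ?addr_ge0 ?sqr_ge0 //.
by rewrite lerDr sqr_ge0.
Qed.

Lemma normc_le_ReIm w : normc w <= `|Re w| + `|Im w|.
Proof.
case: w => u v; rewrite /= -[X in _ <= X]ger0_norm ?addr_ge0 // -sqrtr_sqr.
rewrite ler_sqrt ?sqr_ge0 // sqrrD !real_normK ?num_real // -addrA lerD2l lerDr.
by rewrite mulrn_wge0 // mulr_ge0.
Qed.

Lemma normc_addn_le w n : normc (w + n%:R) <= normc w + n%:R.
Proof. by rewrite -normc_nat le_normcD. Qed.

Lemma normc_addn_ge w n : n%:R - normc w <= normc (w + n%:R).
Proof.
have := le_normcD (w + n%:R) (- w).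
by rewrite (addrC (w + n%:R)) addKr normcN normc_nat lerBlDr.
Qed.

End ComplexNorm.

Section ComplexSeries.
Context {R : realType}.
Implicit Types s x y : R[i]^nat.

Lemma cvg_complex s (l1 l2 : R) :
  Re \o s @ \oo --> l1 -> Im \o s @ \oo --> l2 -> s @ \oo --> l1 +i* l2.
Proof.
move=> Re_cvg Im_cvg; apply/cvgrPdist_lt => e /[dup] e_gt0.
rewrite ltcE => /andP[/eqP Im_e Re_e_gt0].
have e2_gt0 : 0 < Re e / 2 by rewrite divr_gt0.
move/cvgrPdist_lt: Re_cvg => /(_ _ e2_gt0) Re_near.
move/cvgrPdist_lt: Im_cvg => /(_ _ e2_gt0) Im_near.
apply: filterS2 Re_near Im_near => n /= Re_lt Im_lt.
have -> : e = (Re e)%:C by apply/eqP; rewrite eq_complex /= Im_e !eqxx.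
rewrite normr_normc ltcR.
apply: le_lt_trans (normc_le_ReIm _) _; rewrite [Re e]splitr.
by case: (s n) Re_lt Im_lt => u v /= Re_lt Im_lt; apply: ltrD.
Qed.

Lemma Re_series s : Re \o series s = series (Re \o s).
Proof. by apply/funext => n; rewrite /series /= raddf_sum. Qed.

Lemma Im_series s : Im \o series s = series (Im \o s).
Proof. by apply/funext => n; rewrite /series /= raddf_sum. Qed.

Lemma Re_cauchy_prod x y : Re \o cauchy_prod x y
  = cauchy_prod (Re \o x) (Re \o y) - cauchy_prod (Im \o x) (Im \o y).
Proof.
apply/funext => n; rewrite !fctE /cauchy_prod raddf_sum -sumrB.
by apply: eq_bigr => k _; case: (x k) => ? ?; case: (y _) => ? ?.
Qed.

Lemma Im_cauchy_prod x y : Im \o cauchy_prod x y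
  = cauchy_prod (Re \o x) (Im \o y) + cauchy_prod (Im \o x) (Re \o y).
Proof.
apply/funext => n; rewrite !fctE /cauchy_prod raddf_sum -big_split.
by apply: eq_bigr => k _; case: (x k) => ? ?; case: (y _) => ? ?.
Qed.

Lemma is_cvg_normed_series_Re s :
  cvgn (series (normc \o s)) -> cvgn [normed series (Re \o s)].
Proof.
by apply: series_le_cvg => n /=; rewrite ?normr_ge0 ?normc_ge0 ?ler_Re_normc.
Qed.

Lemma is_cvg_normed_series_Im s :
  cvgn (series (normc \o s)) -> cvgn [normed series (Im \o s)].
Proof.
by apply: series_le_cvg => n /=; rewrite ?normr_ge0 ?normc_ge0 ?ler_Im_normc.
Qed.

Lemma cvg_series_normc s : cvgn (series (normc \o s)) ->
  series s @ \oo --> limn (series (Re \o s)) +i* limn (series (Im \o s)).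
Proof.
move=> s_sum; apply: cvg_complex; rewrite ?Re_series ?Im_series.
  exact/(@normed_cvg _ R^o)/is_cvg_normed_series_Re.
exact/(@normed_cvg _ R^o)/is_cvg_normed_series_Im.
Qed.

Lemma cvg_series_cauchy_prod_normc x y :
  cvgn (series (normc \o x)) -> cvgn (series (normc \o y)) ->
  series (cauchy_prod x y) @ \oo --> limn (series x) * limn (series y).
Proof.
move=> x_sum y_sum.
rewrite (cvg_lim _ (cvg_series_normc _ x_sum)) // (cvg_lim _ (cvg_series_normc _ y_sum)) //.
have [Rx Ix] := (is_cvg_normed_series_Re _ x_sum, is_cvg_normed_series_Im _ x_sum).
have [Ry Iy] := (is_cvg_normed_series_Re _ y_sum, is_cvg_normed_series_Im _ y_sum).
apply: cvg_complex.
  rewrite Re_series Re_cauchy_prod seriesD seriesN.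
  by apply: cvgB; apply: cvg_series_cauchy_prod_normed.
rewrite Im_series Im_cauchy_prod seriesD.
by apply: cvgD; apply: cvg_series_cauchy_prod_normed.
Qed.

End ComplexSeries.

Section SineSeries.
Context {R : realType}.
Implicit Types p z : R[i].

Definition sin_coef p k : R[i] :=
  if odd k then (-1) ^+ k./2 * p ^+ k / k`!%:R else 0.

Lemma sin_coef_exp p k :
  (exp_coef ('i * p) k - exp_coef (- ('i * p)) k) / (2 * 'i) = sin_coef p k.
Proof.
have i_neq0 : 'i != 0 :> R[i] by rewrite eq_complex /= oner_eq0 andbF.
have kf_neq0 : k`!%:R != 0 :> R[i] by rewrite pnatr_eq0 -lt0n fact_gt0.
rewrite /exp_coef /sin_coef [(- _) ^+ k]exprNn -[(-1) ^+ k]signr_odd.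
case: ifP => k_odd.
  have iX : 'i ^+ k = 'i * (-1) ^+ k./2 :> R[i].
    by rewrite -{1}(odd_double_half k) k_odd exprS -mul2n exprM sqr_i.
  by rewrite expr1 exprMn iX; field; rewrite kf_neq0 i_neq0.
by rewrite expr0 mul1r subrr mul0r.
Qed.

Lemma cauchy_prod_exp_sin p (f : nat -> R[i]) n :
  (cauchy_prod (exp_coef ('i * p)) f n - cauchy_prod (exp_coef (- ('i * p))) f n)
  / (2 * 'i) = cauchy_prod (sin_coef p) f n.
Proof.
rewrite -sumrB mulr_suml; apply: eq_bigr => k _.
by rewrite -sin_coef_exp -mulrBl mulrAC.
Qed.

Lemma normc_sin_term_le p z k :
  normc (sin_coef p k * z ^+ k) <= exp_coeff (normc p * normc z) k.
Proof.
have pz_ge0 : 0 <= normc p * normc z by rewrite mulr_ge0 ?normc_ge0.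
rewrite /sin_coef; case: odd; last by rewrite mul0r Normc.normc0 exp_coeff_ge0.
rewrite !Normc.normcM Normc.normcV !normcX normc_nat normcN Normc.normc1.
by rewrite expr1n mul1r /exp_coeff /= exprMn mulrAC.
Qed.

Lemma is_cvg_series_normc_sin p z :
  cvgn (series (normc \o (fun k => sin_coef p k * z ^+ k))).
Proof.
apply: (series_le_cvg _ _ (normc_sin_term_le p z)) (is_cvg_series_exp_coeff _) => k.
  exact: normc_ge0.
by apply: exp_coeff_ge0; rewrite mulr_ge0 ?normc_ge0.
Qed.

Lemma Csin_series p z : Csin (p * z) = limn (series (fun k => sin_coef p k * z ^+ k)).
Proof.
set s := fun k => _.
have s_cvg := cvgP _ (cvg_series_normc _ (is_cvg_series_normc_sin p z)).
have sin_even N : series (fun k => (-1) ^+ k * (p * z) ^+ (2 * k + 1) / (2 * k + 1)`!%:R) N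
    = series s (2 * N)%N.
  elim: N => [|N IH]; first by rewrite /series /= !big_geq.
  rewrite mulnS !seriesSr IH -addrA /s /sin_coef /= !mul2n addn1 odd_double.
  by rewrite uphalf_double mul0r add0r exprMn /=; ring.
rewrite /Csin; apply: cvg_lim => //.
by rewrite (funext sin_even); apply: cvg_comp s_cvg; apply: cvg_mulnl.
Qed.

End SineSeries.

Section HypergeometricSeries.
Context {R : realType} {a b c : R[i]}.
Local Notation f := (hyp_coef a b c).

Lemma poch_S (x : R[i]) m : poch x m.+1 = poch x m * (x + m%:R).
Proof. by rewrite /poch big_ord_recr. Qed.

Lemma hyp_coefS m :
  f m.+1 = f m * ((a + m%:R) * (b + m%:R) / (m.+1%:R * (c + m%:R))).
Proof.
rewrite /hyp_coef !poch_S factS natrM !invfM; ring.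
Qed.

Hypothesis c_nneg : forall m : nat, c != - m%:R.

Lemma c_addn_neq0 m : c + m%:R != 0.
Proof. by rewrite addr_eq0 c_nneg. Qed.

Lemma hyp_coef_rec m :
  m.+1%:R * (c + m%:R) * f m.+1 = (a + m%:R) * (b + m%:R) * f m.
Proof.
by rewrite hyp_coefS; field; rewrite c_addn_neq0 nat1r pnatr_eq0.
Qed.

Lemma cauchy_prod_exp_hyp_unique (p q : R[i]) (w : nat -> R[i]) :
  q ^+ 2 = - p ^+ 2 -> w 0%N = 1 -> w 1%N = a * b / c + q ->
  w 2%N = q * a * b / c + a * (a + 1) * b * (b + 1) / (2 * c * (c + 1)) - p ^+ 2 / 2 ->
  (forall n, (2 <= n)%N -> w n.+1 =
      ((a + n%:R) * (b + n%:R) + q * (c + 2 * n%:R)) / ((n%:R + 1) * (c + n%:R)) * w n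
    + (p ^+ 2 - q * (a + b + 2 * n%:R - 1)) / ((n%:R + 1) * (c + n%:R)) * w n.-1
    - p ^+ 2 / ((n%:R + 1) * (c + n%:R)) * w n.-2) ->
  w =1 cauchy_prod (exp_coef q) f.
Proof.
have c0 : c != 0 by have := c_addn_neq0 0; rewrite addr0.
have c1 : c + 1 != 0 := c_addn_neq0 1.
move=> qp w0 w1 w2 w_rec.
apply: (cauchy_prod_exp_unique hyp_coef_rec p q w qp c_addn_neq0 _ _ _ w_rec);
  rewrite ?w0 ?w1 ?w2 /cauchy_prod /exp_coef /hyp_coef /poch !big_ord_recr !big_ord0 /=;
  rewrite ?(subnn, subn0, subSS) ?(factS, fact0) ?qp.
all: by field; rewrite ?c0 ?c1.
Qed.

Lemma hyp_ratio_le t : 1 < t -> \forall n \near \oo,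
  normc ((a + n%:R) * (b + n%:R) / (n.+1%:R * (c + n%:R))) <= t ^+ 2.
Proof.
move=> t_gt1; have [[a0 b0] c0] := (normc_ge0 a, normc_ge0 b, normc_ge0 c).
near=> n.
have n_big : (normc a + normc b + t * normc c) / (t - 1) < n%:R.
  by near: n; apply: nbhs_infty_gtr.
rewrite ltr_pdivrMr ?subr_gt0 // in n_big.
have c_lt : normc c < n%:R by near: n; apply: nbhs_infty_gtr.
have tc0 : 0 <= t * normc c by rewrite mulr_ge0 //; lra.
have a_le : normc (a + n%:R) <= t * n.+1%:R.
  by apply: le_trans (normc_addn_le _ _) _; rewrite -natr1; lra.
have b_le : normc (b + n%:R) <= t * normc (c + n%:R).
  apply: le_trans (normc_addn_le _ _) _.
  apply: le_trans (_ : t * (n%:R - normc c) <= _).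
    lra.
  by rewrite ler_wpM2l ?normc_addn_ge //; lra.
have cn_gt0 : 0 < normc (c + n%:R) by apply: lt_le_trans (normc_addn_ge _ _); lra.
rewrite !Normc.normcM Normc.normcV Normc.normcM normc_nat ler_pdivrMr ?mulr_gt0 //.
apply: le_trans (ler_pM (normc_ge0 _) (normc_ge0 _) a_le b_le) _.
by rewrite expr2; lra.
Unshelve. all: by end_near.
Qed.

Lemma is_cvg_series_normc_hyp z : normc z < 1 ->
  cvgn (series (normc \o (fun n => f n * z ^+ n))).
Proof.
move=> z_lt1; have z_ge0 := normc_ge0 z.
pose t := 2 / (1 + normc z).
have t_gt1 : 1 < t by rewrite /t ltr_pdivlMr ?mul1r; lra.
have rho_lt1 : t ^+ 2 * normc z < 1.
  have sq_gt0 : 0 < (1 + normc z) ^+ 2 by rewrite exprn_gt0 //; lra.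
  by rewrite /t expr_div_n mulrAC ltr_pdivrMr // mul1r !expr2; nra.
apply: (ratio_test _ (t ^+ 2 * normc z)) => [n||]; first exact: normc_ge0.
  by rewrite rho_lt1 mulr_ge0 // exprn_ge0 //; lra.
near=> n.
have r_le : normc ((a + n%:R) * (b + n%:R) / (n.+1%:R * (c + n%:R))) <= t ^+ 2.
  by near: n; exact: hyp_ratio_le.
rewrite /= hyp_coefS exprSr.
rewrite mulrACA Normc.normcM [normc (_ * z)]Normc.normcM [leLHS]mulrC.
by rewrite ler_wpM2r ?normc_ge0 // ler_wpM2r.
Unshelve. all: by end_near.
Qed.

End HypergeometricSeries.

Theorem theorem3p4 (R : realType) (a b c p : R[i]) (u v : nat -> R[i])
  (hc : forall m : nat, c != - m%:R)
  (hu0 : u 0%N = 1)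
  (hu1 : u 1%N = a * b / c + 'i * p)
  (hu2 : u 2%N = 'i * a * b * p / c
                 + a * (a + 1) * b * (b + 1) / (2 * c * (c + 1)) - p ^+ 2 / 2)
  (hv0 : v 0%N = 1)
  (hv1 : v 1%N = a * b / c - 'i * p)
  (hv2 : v 2%N = - ('i * a * b * p / c)
                 + a * (a + 1) * b * (b + 1) / (2 * c * (c + 1)) - p ^+ 2 / 2)
  (hun : forall n : nat, (2 <= n)%N ->
     u n.+1 = ((a + n%:R) * (b + n%:R) + 'i * p * (c + 2 * n%:R))
                / ((n%:R + 1) * (c + n%:R)) * u n
            + p * (p - 'i * (a + b + 2 * n%:R - 1))
                / ((n%:R + 1) * (c + n%:R)) * u n.-1
            - p ^+ 2 / ((n%:R + 1) * (c + n%:R)) * u n.-2)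
  (hvn : forall n : nat, (2 <= n)%N ->
     v n.+1 = ((a + n%:R) * (b + n%:R) - 'i * p * (c + 2 * n%:R))
                / ((n%:R + 1) * (c + n%:R)) * v n
            + p * (p + 'i * (a + b + 2 * n%:R - 1))
                / ((n%:R + 1) * (c + n%:R)) * v n.-1
            - p ^+ 2 / ((n%:R + 1) * (c + n%:R)) * v n.-2)
  (z : R[i]) (hz : `|z| < 1) :
  series (fun n => (u n - v n) / (2 * 'i) * z ^+ n) @ \oo
    --> Csin (p * z) * hypF a b c z.
Proof.
have ip2 : ('i * p) ^+ 2 = - p ^+ 2 by rewrite exprMn sqr_i mulN1r.
have u_exp : u =1 cauchy_prod (exp_coef ('i * p)) (hyp_coef a b c).
  apply: (cauchy_prod_exp_hyp_unique hc _ _ _ ip2 hu0 hu1); first by rewrite hu2; ring.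
  by move=> n n2; rewrite hun //; congr (_ + _ - _); congr (_ / _ * _); ring.
have v_exp : v =1 cauchy_prod (exp_coef (- ('i * p))) (hyp_coef a b c).
  apply: (cauchy_prod_exp_hyp_unique hc p _ _ _ hv0 hv1); rewrite ?sqrrN //.
    by rewrite hv2; ring.
  by move=> n n2; rewrite hvn //; congr (_ + _ - _); congr (_ / _ * _); ring.
have -> : (fun n => (u n - v n) / (2 * 'i) * z ^+ n)
    = cauchy_prod (fun k => sin_coef p k * z ^+ k) (fun k => hyp_coef a b c k * z ^+ k).
  by apply/funext => n; rewrite cauchy_prod_mulrX u_exp v_exp cauchy_prod_exp_sin.
have z_lt1 : Normc.normc z < 1 by rewrite -ltcR -normr_normc.
rewrite Csin_series; apply: cvg_series_cauchy_prod_normc.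
  exact: is_cvg_series_normc_sin.
exact: is_cvg_series_normc_hyp.
Qed.
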